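(* Let $r\ge1$ and let $A,B$ be integers with $0\le B<A\le r$. For all real numbers $v_0,v_1,\dots,v_r$, $$\sum_{i=B}^{A}\ \prod_{\alpha=0}^{i-1}(v_A-v_\alpha)\prod_{\beta=i+1}^{r}(v_B-v_\beta)=0,$$ where an empty product (e.g. $\prod_{\alpha=0}^{-1}$ or $\prod_{\beta=r+1}^{r}$) equals $1$. *)

From mathcomp Require Import all_boot all_order all_algebra.
From mathcomp Require Export reals.

From HB Require Import structures.
From mathcomp Require Import all_boot all_order all_algebra.
From mathcomp Require Import reals.
From mathcomp Require Import ring.
Import GRing.Theory Num.Theory.
Local Open Scope ring_scope.

(* With [x = v_A] and [y = v_B], the summand is [P_i * Q_(i+1)] where
   [P_i = prod_(a < i) (x - v_a)] and [Q_j = prod_(j <= b <= r) (y - v_b)].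
   Since [P_(i+1) Q_(i+1) - P_i Q_i = (x - y) P_i Q_(i+1)], multiplying the sum
   by [x - y] telescopes it to [P_(A+1) Q_(A+1) - P_B Q_B], and both terms
   vanish: [P_(A+1)] has the factor [v_A - v_A], [Q_B] the factor [v_B - v_B].
   This settles the case [v_A <> v_B]; if [v_A = v_B], every summand contains
   one of these two zero factors. *)

Lemma prod_nat_factor0 (R : comPzSemiRingType) (m n j : nat) (F : nat -> R) :
  (m <= j < n)%N -> F j = 0 -> \prod_(m <= k < n) F k = 0.
Proof.
move=> jmn Fj0; rewrite (bigD1_seq j) ?mem_index_iota ?iota_uniq //=.
by rewrite Fj0 mul0r.
Qed.

Section Telescope.

Variables (R : comPzRingType) (x y : R) (v : nat -> R) (n : nat).

Definition split_prod (i : nat) : R :=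
  (\prod_(0 <= a < i) (x - v a)) * \prod_(i <= b < n) (y - v b).

Lemma split_prodS (i : nat) : (i < n)%N ->
  split_prod i.+1 - split_prod i =
  (x - y) * ((\prod_(0 <= a < i) (x - v a)) * \prod_(i.+1 <= b < n) (y - v b)).
Proof.
move=> lt_in; rewrite /split_prod big_nat_recr //= (big_ltn lt_in) /=.
by ring.
Qed.

Lemma telescope_split_prod (m k : nat) : (m <= k <= n)%N ->
  (x - y) * \sum_(m <= i < k)
     ((\prod_(0 <= a < i) (x - v a)) * \prod_(i.+1 <= b < n) (y - v b)) =
  split_prod k - split_prod m.
Proof.
case/andP=> le_mk le_kn; rewrite mulr_sumr; apply: telescope_sumr_eq => // i.
by case/andP=> _ lt_ik; rewrite split_prodS // (leq_trans lt_ik).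
Qed.

End Telescope.

Arguments split_prod {R} x y v n i.

Lemma sum_split_prod_eq0 (R : idomainType) (v : nat -> R) (n A B : nat) :
  (B < A)%N -> (A < n)%N ->
  \sum_(B <= i < A.+1)
     ((\prod_(0 <= a < i) (v A - v a)) * \prod_(i.+1 <= b < n) (v B - v b)) = 0.
Proof.
move=> lt_BA lt_An.
have [eq_AB | neq_AB] := eqVneq (v A) (v B).
  rewrite big1_seq // => i; rewrite mem_index_iota => /andP[le_Bi _].
  have [lt_Bi | le_iB] := ltnP B i.
    by rewrite (@prod_nat_factor0 _ 0 i B) ?mul0r ?lt_Bi // eq_AB subrr.
  rewrite (@prod_nat_factor0 _ i.+1 n A) ?mulr0 ?lt_An ?(leq_ltn_trans le_iB) //.
  by rewrite eq_AB subrr.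
have vanish_top : split_prod (v A) (v B) v n A.+1 = 0.
  by rewrite /split_prod (@prod_nat_factor0 _ 0 A.+1 A) ?mul0r ?subrr ?leqnn.
have vanish_bot : split_prod (v A) (v B) v n B = 0.
  rewrite /split_prod (@prod_nat_factor0 _ B n B) ?mulr0 ?subrr ?leqnn //.
  exact: ltn_trans lt_BA lt_An.
have le_range : (B <= A.+1 <= n)%N by rewrite lt_An andbT leqW // ltnW.
move: (@telescope_split_prod _ (v A) (v B) v n _ _ le_range).
rewrite vanish_top vanish_bot subrr => /eqP.
by rewrite mulf_eq0 subr_eq0 (negbTE neq_AB) /= => /eqP.
Qed.

Theorem mainTheorem3 (R : realType) (r A B : nat) (v : nat -> R)
  (hr : (1 <= r)%N) (hBA : (B < A)%N) (hAr : (A <= r)%N) :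
  \sum_(B <= i < A.+1)
     ((\prod_(0 <= a < i) (v A - v a)) *
      (\prod_(i.+1 <= b < r.+1) (v B - v b))) = 0.
Proof. exact: sum_split_prod_eq0. Qed.
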